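(* Let $\Phi=B_l$ or $C_l$ with $l\ge2$. There exist fields $K\subseteq F$ of characteristic $2$, with $F$ a finite (hence algebraic) extension of the nonperfect field $K$, and an admissible pair $(\Lambda_l,\Lambda_s)=(Q,P)$ of type $\Phi$ in $F$ with $K\subseteq Q\subseteq P\subseteq F$, such that: (1) if $\Phi=B_l$, $l\ge3$, then $P$ is not a field; (2) if $\Phi=C_l$, $l\ge3$, then $Q$ is not a field; (3) if $\Phi=B_2=C_2$, then neither $P$ nor $Q$ is a field.
   Context: Let $p=2$ for $\Phi=B_l,C_l$. An admissible pair of type $\Phi$ in a ring $R$ is a pair $\Lambda=(\Lambda_l,\Lambda_s)$ of additive subgroups of $R$ with: (AP1) $p\Lambda_s\subseteq\Lambda_l\subseteq\Lambda_s$; (AP2) $t^p\Lambda_l\subseteq\Lambda_l$ for all $t\in\Lambda_s$; (AP3) $\Lambda_s$ is a subring if $\Phi\ne B_l$; (AP4) $\Lambda_l$ is a subring if $\Phi\ne C_l$; and moreover $\Lambda_l\Lambda_s\subseteq\Lambda_s$. For $\Phi=B_2=C_2$ neither $\Lambda_l$ nor $\Lambda_s$ is required to be a subring. *)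

From HB Require Import structures.
From mathcomp Require Import all_boot all_order all_algebra all_field.
Set Implicit Arguments. Unset Strict Implicit. Unset Printing Implicit Defensive.
Import GRing.Theory.
Local Open Scope ring_scope.

Inductive rsType := TypeB | TypeC.

Section Defs.
Variable F : fieldType.

Definition add_subgroup (A : pred F) : Prop :=
  0 \in A /\ (forall x y, x \in A -> y \in A -> x - y \in A).

Definition is_subring (A : pred F) : Prop :=
  add_subgroup A /\ 1 \in A /\ (forall x y, x \in A -> y \in A -> x * y \in A).

Definition is_subfield (A : pred F) : Prop :=
  is_subring A /\ (forall x, x \in A -> x != 0 -> x^-1 \in A).

(* Admissible pair (Ll, Ls) of type Phi = typ_l, with p = 2.
   For l = 2 (B_2 = C_2) neither component is required to be a subring. *)
Definition admissible_pair (typ : rsType) (l : nat) (Ll Ls : pred F) : Prop :=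
  [/\ add_subgroup Ll /\ add_subgroup Ls,
      (forall x, x \in Ls -> 2%:R * x \in Ll) /\ ({subset Ll <= Ls}),
      (forall t x, t \in Ls -> x \in Ll -> t ^+ 2 * x \in Ll),
      (typ = TypeC -> (3 <= l)%N -> is_subring Ls) /\
      (typ = TypeB -> (3 <= l)%N -> is_subring Ll)
    & (forall x y, x \in Ll -> y \in Ls -> x * y \in Ls)].
End Defs.

Definition perfect_pchar (K : fieldType) (p : nat) : Prop :=
  forall x : K, exists y : K, y ^+ p = x.

From HB Require Import structures.
From mathcomp Require Import all_boot all_order all_algebra all_field.
Set Implicit Arguments. Unset Strict Implicit. Unset Printing Implicit Defensive.
Import GRing.Theory.
Local Open Scope ring_scope.

(* Take L = F_2(y0, y1, y2, y3) and let F be L seen as an algebra over K := L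
   through the square map, so that F/K is the extension L/L^2: it has degree 16,
   the monomials y^A (A a subset of {0,..,3}) form a K-basis, and x^2 lies in K
   for every x in F.  K-spans of sets of monomials are therefore stable under
   multiplication by squares, and span(S) * span(T) lies in the span of the
   symmetric differences A (+) B, A in S, B in T.  With Q = K + K y0 + K y1 and
   P = E + E y2 + E y3, E = K[y0, y1], the pair (Q, P) is admissible of type B_2,
   while y0 y1 is not in Q and y2 y3 is not in P; for l >= 3 the pairs (K, Q)
   and (Q, F) serve for B_l and C_l.  K is not perfect since y0 has no square
   root in L.  The 2-basis of L over L^2 is built one variable at a time:
   adjoining a transcendental X to M turns a 2-basis b of M into {b, b X}. *)

Section SquareBasis.
Variable R : comNzRingType.

Definition sq_spanning (I : finType) (e : I -> R) :=
  forall x, exists c : I -> R, x = \sum_i c i ^+ 2 * e i.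
Definition sq_free (I : finType) (e : I -> R) :=
  forall c : I -> R, \sum_i c i ^+ 2 * e i = 0 -> forall i, c i = 0.
Definition sq_basis (I : finType) (e : I -> R) := sq_spanning e /\ sq_free e.

Lemma sq_basis_reindex (I J : finType) (h : J -> I) (e : I -> R) (e' : J -> R) :
  bijective h -> e' =1 e \o h -> sq_basis e -> sq_basis e'.
Proof.
move=> [h' hK h'K] ee' [e_span e_free]; split.
  move=> x; have [c ->] := e_span x; exists (c \o h).
  rewrite (reindex h) /=; last by exists h'.
  by apply: eq_big => // j _; rewrite ee'.
move=> c hc j; rewrite -[j]hK; apply: (e_free (c \o h')) => /=.
rewrite (reindex h) /=; last by exists h'.
by rewrite -[RHS]hc; apply: eq_bigr => i _; rewrite hK ee'.
Qed.

Lemma sq_free_inj (I : finType) (e : I -> R) : 2 \in [pchar R] -> sq_free e ->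
  forall c d : I -> R, \sum_i c i ^+ 2 * e i = \sum_i d i ^+ 2 * e i -> c =1 d.
Proof.
move=> R2 e_free c d cd i; apply/eqP; rewrite -subr_eq0; apply/eqP; move: i.
apply: e_free; rewrite -[RHS](subrr (\sum_i d i ^+ 2 * e i)) -{1}cd -sumrB.
by apply: eq_bigr => i _; rewrite -mulrBl -!(pFrobenius_autE R2) rmorphB.
Qed.

Section Coordinates.
Variables (I : finType) (e : I -> R).
Hypothesis e_span : sq_spanning e.

Lemma sq_coord_subproof x : exists c : {ffun I -> R}, x == \sum_i c i ^+ 2 * e i.
Proof.
have [c ->] := e_span x; exists [ffun i => c i].
by apply/eqP/eq_bigr => i _; rewrite ffunE.
Qed.

Definition sq_coord x : {ffun I -> R} := xchoose (sq_coord_subproof x).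

Lemma sq_coordK x : x = \sum_i sq_coord x i ^+ 2 * e i.
Proof. exact/eqP/(xchooseP (sq_coord_subproof x)). Qed.
End Coordinates.
End SquareBasis.

Definition monomial (R : comNzRingType) n (y : 'I_n -> R) (A : {set 'I_n}) : R :=
  \prod_k y k ^+ (k \in A).

Definition setSD (T : finType) (A B : {set T}) := (A :\: B) :|: (B :\: A).
Definition setSD_closed (T : finType) (P : pred {set T}) :=
  P set0 /\ forall A B, P A -> P B -> P (setSD A B).

Section Monomials.
Variables (R : comNzRingType) (n : nat) (y : 'I_n -> R).
Implicit Types A B : {set 'I_n}.

Lemma monomial0 : monomial y set0 = 1.
Proof. by rewrite /monomial big1 // => k _; rewrite inE. Qed.

Lemma monomial_mul A B :
  monomial y A * monomial y B = monomial y (A :&: B) ^+ 2 * monomial y (setSD A B).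
Proof.
rewrite /monomial -big_split -prodrXl -big_split /=; apply: eq_bigr => k _.
rewrite !inE; case: (k \in A); case: (k \in B);
  by rewrite ?expr0 ?expr1 ?expr1n ?mulr1 ?mul1r.
Qed.

Lemma monomialU A B : [disjoint A & B] ->
  monomial y (A :|: B) = monomial y A * monomial y B.
Proof.
move=> /pred0P dAB; rewrite /monomial -big_split /=; apply: eq_bigr => k _.
have := dAB k; rewrite !inE /=.
by case: (k \in A); case: (k \in B) => //= _; rewrite ?expr0 ?expr1 ?mulr1 ?mul1r.
Qed.
End Monomials.

Lemma sqr_poly_pchar2 (R : comNzRingType) (R2 : 2 \in [pchar R]) (p : {poly R}) :
  p ^+ 2 = map_poly (pFrobenius_aut R2) p \Po 'X^2.
Proof.
have P2 : 2 \in [pchar {poly R}] by rewrite pchar_poly.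
elim/poly_ind: p => [|p c IHp]; first by rewrite expr0n /= map_poly0 comp_poly0.
rewrite -(pFrobenius_autE P2) rmorphD rmorphM /= !pFrobenius_autE IHp.
rewrite rmorphD rmorphM /= map_polyX map_polyC /= pFrobenius_autE.
by rewrite comp_polyD comp_polyM comp_polyX comp_polyC rmorphXn.
Qed.

Lemma coef_sqr_pchar2 (R : comNzRingType) (R2 : 2 \in [pchar R]) (p : {poly R}) m :
  (p ^+ 2)`_m = if odd m then 0 else p`_(m./2) ^+ 2.
Proof.
rewrite (sqr_poly_pchar2 R2) coef_comp_poly_Xn // dvdn2 divn2.
by case: (odd m); rewrite //= coef_map /= pFrobenius_autE.
Qed.

Section FractionRepresentation.
Variable R : idomainType.
Local Open Scope quotient_scope.

Lemma tofrac_repr (x : {fraction R}) : exists p q : R, q != 0 /\ x * tofrac q = tofrac p.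
Proof.
elim/quotW: x => r; exists \n_r, \d_r; split; first exact: denom_ratioP.
change (FracField.mul (\pi r) (tofrac \d_r) = tofrac \n_r).
rewrite !piE /= /FracField.mulf; apply/eqmodP; rewrite /= FracField.equivfE.
by rewrite !numden_Ratio ?(oner_eq0, mulf_neq0, denom_ratioP) // !mulr1 mulrC.
Qed.

Lemma tofrac_common_denom (J : finType) (c : J -> {fraction R}) :
  exists2 D : R, D != 0 & forall j, exists p, c j * tofrac D = tofrac p.
Proof.
have /fin_all_exists[p /fin_all_exists[q pq]] := fun j => tofrac_repr (c j).
exists (\prod_j q j); first by apply/prodf_neq0 => j _; case: (pq j).
move=> j; exists (p j * \prod_(k | k != j) q k).
by rewrite (bigD1 j) //= !tofracM mulrA; case: (pq j) => _ ->.
Qed.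
End FractionRepresentation.

Section FractionStep.
Variables (M : fieldType) (I : finType) (e : I -> M).
Hypotheses (M2 : 2 \in [pchar M]) (e_basis : sq_basis e).
Local Notation L := {fraction {poly M}}.

Definition poly_ext (p : bool * I) : {poly M} := 'X ^+ p.1 * (e p.2)%:P.
Definition frac_ext (p : bool * I) : L := tofrac (poly_ext p).

Lemma coef_sq_poly_ext (g : bool * I -> {poly M}) (b : bool) k :
  (\sum_p g p ^+ 2 * poly_ext p)`_(k.*2 + b) = \sum_i (g (b, i))`_k ^+ 2 * e i.
Proof.
pose t b' i := (g (b', i) ^+ 2 * poly_ext (b', i))`_(k.*2 + b).
have coef_term b' i : t b' i = if b' == b then (g (b', i))`_k ^+ 2 * e i else 0.
  rewrite /t mulrCA coefXnM coefMC (coef_sqr_pchar2 M2) /=.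
  case: b' b {t} => [] [] /=; rewrite ?addn1 ?addn0.
  - by rewrite ltnS ltn0 subn1 /= odd_double half_double.
  - by case: k => [|k] //=; rewrite odd_double mul0r.
  - by rewrite subn0 /= odd_double mul0r.
  - by rewrite subn0 odd_double half_double.
rewrite coef_sum (eq_bigr (fun p => t p.1 p.2)); last by case.
rewrite -(pair_bigA _ t) big_bool /= !(eq_bigr _ (fun i _ => coef_term _ i)).
case: b {t coef_term} => /=; first by rewrite [X in _ + X]big1 ?addr0.
by rewrite big1 ?add0r.
Qed.

Lemma poly_ext_sq_basis : sq_basis poly_ext.
Proof.
have [e_span e_free] := e_basis; split.
  move=> p.
  exists (fun q : bool * I => \poly_(k < size p) sq_coord e_span p`_(k.*2 + q.1) q.2).
  apply/polyP => m; rewrite -(odd_double_half m) addnC coef_sq_poly_ext.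
  under eq_bigr do rewrite coef_poly.
  case: ltnP => [_|le_p_k]; first exact: sq_coordK.
  rewrite nth_default; last by rewrite (leq_trans le_p_k) // -addnn -addnA leq_addr.
  by rewrite big1 // => i _; rewrite expr0n mul0r.
move=> g g0 [b i]; apply/polyP => k; rewrite coef0; move: i.
by apply: e_free; rewrite -coef_sq_poly_ext g0 coef0.
Qed.

Lemma frac_ext_sq_basis : sq_basis frac_ext.
Proof.
have [p_span p_free] := poly_ext_sq_basis.
have M2P : 2 \in [pchar {poly M}] by rewrite pchar_poly.
split.
  move=> x; have [p [q [q0 xq]]] := tofrac_repr x; have [g pqg] := p_span (p * q).
  have q20 : tofrac q ^+ 2 != 0 by rewrite expf_neq0 // tofrac_eq0.
  exists (fun j => tofrac (g j) / tofrac q); apply: (mulIf q20).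
  rewrite expr2 mulrA xq -[LHS]tofracM pqg rmorph_sum mulr_suml -expr2.
  apply: eq_bigr => j _.
  by rewrite rmorphM rmorphXn [RHS]mulrAC expr_div_n divfK.
move=> c c0; have [D D0 cD] := tofrac_common_denom c.
have /fin_all_exists[P PD] := cD.
suff P0 j : P j = 0.
  move=> j; have := PD j; rewrite P0 rmorph0 => /eqP.
  by rewrite mulf_eq0 tofrac_eq0 (negbTE D0) orbF => /eqP.
move: j; apply: p_free; apply/eqP; rewrite -tofrac_eq0 rmorph_sum /=.
rewrite (eq_bigr (fun j => c j ^+ 2 * frac_ext j * tofrac D ^+ 2)) => [|j _].
  by rewrite -mulr_suml c0 mul0r.
by rewrite [RHS]mulrAC -exprMn PD rmorphM rmorphXn.
Qed.

End FractionStep.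

Definition adjoin_var (M : fieldType) n (y : 'I_n -> M) (k : 'I_n.+1) :
    {fraction {poly M}} :=
  if unlift ord0 k is Some k' then tofrac (y k')%:P else tofrac 'X.

Definition split_set n (A : {set 'I_n.+1}) : bool * {set 'I_n} :=
  (ord0 \in A, [set k | lift ord0 k \in A]).

Lemma split_set_bij n : bijective (@split_set n).
Proof.
pose merge (p : bool * {set 'I_n}) :=
  [set k : 'I_n.+1 | if unlift ord0 k is Some k' then k' \in p.2 else p.1].
exists merge => [A | [b B]]; rewrite /split_set /merge.
  by apply/setP => k; rewrite inE; case: unliftP => [k'|] ->; rewrite ?inE.
by congr (_, _); [rewrite inE unlift_none | apply/setP => k; rewrite !inE liftK].
Qed.

Lemma monomial_adjoin_var (M : fieldType) n (y : 'I_n -> M) (A : {set 'I_n.+1}) :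
  monomial (adjoin_var y) A = frac_ext (monomial y) (split_set A).
Proof.
rewrite /monomial /frac_ext /poly_ext big_ord_recl /adjoin_var unlift_none /=.
rewrite rmorphM rmorphXn /= rmorph_prod /= rmorph_prod; congr (_ * _).
by apply: eq_bigr => k _; rewrite liftK !rmorphXn inE.
Qed.

Lemma exists_monomial_sq_basis n :
  exists (L : fieldType) (y : 'I_n -> L), 2 \in [pchar L] /\ sq_basis (monomial y).
Proof.
elim: n => [|n [L [y [L2 y_basis]]]].
  exists 'F_2, (fun=> 0); split; first exact: pchar_Fp.
  have sum1 (F : {set 'I_0} -> 'F_2) : \sum_A F A = F set0.
    by apply: big_pred1 => A; apply/esym/eqP/setP; case.
  split=> [a | c].
    by exists (fun=> a); rewrite sum1 monomial0 mulr1 -[LHS](expf_card a) card_Fp.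
  rewrite sum1 monomial0 mulr1 => /eqP; rewrite expf_eq0 /= => /eqP c0 A.
  by rewrite (_ : A = set0) //; apply/setP; case.
exists {fraction {poly L}}, (adjoin_var y); split.
  by apply: (rmorph_pchar (@tofrac {poly L})); rewrite pchar_poly.
apply: (sq_basis_reindex (split_set_bij n)) (monomial_adjoin_var y) _.
exact: frac_ext_sq_basis.
Qed.

Section FrobeniusExtension.
Variables (L : fieldType) (I : finType) (e : I -> L).
Hypotheses (L2 : 2 \in [pchar L]) (e_basis : sq_basis e).

Definition frob : Type := L.
HB.instance Definition _ := GRing.Field.on frob.

Definition frob_scale (k : L) (x : frob) : frob := k ^+ 2 * x.

Fact frob_scaleA a b x : frob_scale a (frob_scale b x) = frob_scale (a * b) x.
Proof. by rewrite /frob_scale exprMn mulrA. Qed.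
Fact frob_scale1 x : frob_scale 1 x = x.
Proof. by rewrite /frob_scale expr1n mul1r. Qed.
Fact frob_scaleDr a x y : frob_scale a (x + y) = frob_scale a x + frob_scale a y.
Proof. by rewrite /frob_scale mulrDr. Qed.
Fact frob_scaleDl x a b : frob_scale (a + b) x = frob_scale a x + frob_scale b x.
Proof. by rewrite /frob_scale -mulrDl -!(pFrobenius_autE L2) rmorphD. Qed.

HB.instance Definition _ := GRing.Zmodule_isLmodule.Build L frob
  frob_scaleA frob_scale1 frob_scaleDr frob_scaleDl.

Fact frob_scaleAl a (x y : frob) : frob_scale a (x * y) = frob_scale a x * y.
Proof. exact: mulrA. Qed.
HB.instance Definition _ := GRing.Lmodule_isLalgebra.Build L frob frob_scaleAl.
Fact frob_scaleAr a (x y : frob) : frob_scale a (x * y) = x * frob_scale a y.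
Proof. exact: mulrCA. Qed.
HB.instance Definition _ := GRing.Lalgebra_isAlgebra.Build L frob frob_scaleAr.

Let e_span : sq_spanning e := e_basis.1.

Definition frob_coord (x : frob) : 'rV[L]_#|I| := \row_j sq_coord e_span x (enum_val j).
Definition frob_of_coord (r : 'rV[L]_#|I|) : frob := \sum_i r 0 (enum_rank i) ^+ 2 * e i.

Lemma frob_coordK : cancel frob_coord frob_of_coord.
Proof.
move=> x; rewrite [RHS](sq_coordK e_span) /frob_of_coord.
by apply: eq_bigr => i _; rewrite mxE enum_rankK.
Qed.

Lemma frob_of_coordK : cancel frob_of_coord frob_coord.
Proof.
move=> r; apply/rowP => j; rewrite mxE.
rewrite (sq_free_inj L2 e_basis.2 (esym (sq_coordK e_span (frob_of_coord r)))).
by rewrite enum_valK.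
Qed.

Lemma frob_coord_linear : linear frob_coord.
Proof.
move=> a x y; apply: (can_inj frob_of_coordK); rewrite frob_coordK.
rewrite -[x in LHS]frob_coordK -[y in LHS]frob_coordK /frob_of_coord.
rewrite [_ *: _]/(frob_scale _ _) mulr_sumr -big_split; apply: eq_bigr => i _.
by rewrite !mxE -!(pFrobenius_autE L2) rmorphD rmorphM mulrDl mulrA.
Qed.

HB.instance Definition _ := Lmodule_hasFinDim.Build L frob
  (exist2 _ _ frob_coord frob_coord_linear (Bijective frob_coordK frob_of_coordK)).

Definition frob_ext : fieldExtType L := frob.

Lemma frob_ext_sqr (x : frob_ext) : x ^+ 2 \in 1%VS.
Proof. by rewrite -[x ^+ 2]mulr1 memvZ // mem1v. Qed.

Lemma frob_ext_free (c : I -> L) : \sum_i c i *: (e i : frob_ext) = 0 -> forall i, c i = 0.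
Proof. exact: e_basis.2. Qed.
End FrobeniusExtension.

Section MonomialSpan.
Variables (K : fieldType) (F : fieldExtType K) (n : nat) (y : 'I_n -> F).
Implicit Types (A B : {set 'I_n}) (P Q R : pred {set 'I_n}).
Local Notation m := (monomial y).

Definition monomials_free :=
  forall c : {set 'I_n} -> K, \sum_A c A *: m A = 0 -> forall A, c A = 0.

Hypotheses (K2 : 2 \in [pchar K]) (F_sqr : forall x : F, x ^+ 2 \in 1%VS).
Hypothesis m_free : monomials_free.

Definition mspan P : {vspace F} := (\sum_(A | P A) <[m A]>)%VS.

Lemma monomial_mspan P A : P A -> m A \in mspan P.
Proof. by move=> PA; apply: (subvP (sumv_sup A PA (subvv _))); apply: memv_line. Qed.

Lemma mspanS P Q : {subset P <= Q} -> (mspan P <= mspan Q)%VS.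
Proof. by move=> sPQ; apply/subv_sumP => A PA; apply: sumv_sup (sPQ A PA) _. Qed.

Lemma monomial_notin_mspan P A : ~~ P A -> m A \notin mspan P.
Proof.
move=> nPA; apply/negP => /memv_sumP[v vP mA].
have /fin_all_exists[c vc] B : exists k, P B -> v B = k *: m B.
  by case PB: (P B); [have /vlineP[k ->] := vP B PB; exists k | exists 0].
pose d B := (if P B then c B else 0) - (B == A)%:R.
suff /eqP : d A = 0 by rewrite /d (negbTE nPA) eqxx sub0r oppr_eq0 oner_eq0.
apply: m_free; rewrite /d; under eq_bigr do rewrite scalerBl.
rewrite sumrB [X in _ - X](bigD1 A) //= eqxx scale1r [X in m A + X]big1 ?addr0.
  apply/eqP; rewrite mA subr_eq0; apply/eqP; rewrite [RHS]big_mkcond.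
  by apply: eq_bigr => B _; case PB: (P B); rewrite ?scale0r ?vc.
by move=> B /negbTE ->; rewrite scale0r.
Qed.

Lemma mspan_mul P Q R : (forall A B, P A -> Q B -> R (setSD A B)) ->
  {in mspan P & mspan Q, forall u v, u * v \in mspan R}.
Proof.
move=> PQR u v /memv_sumP[us usP ->] /memv_sumP[vs vsQ ->].
rewrite mulr_suml; apply: memv_suml => A PA; rewrite mulr_sumr; apply: memv_suml => B QB.
have [[a ->] [b ->]] := (vlineP _ _ (usP A PA), vlineP _ _ (vsQ B QB)).
rewrite -scalerAl -scalerAr !memvZ // monomial_mul.
have /vlineP[c ->] := F_sqr (m (A :&: B)).
by rewrite -scalerAl mul1r memvZ // monomial_mspan // PQR.
Qed.

Lemma mspan_subring P : setSD_closed P -> is_subring (pred_of_vspace (mspan P)).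
Proof.
move=> [P0 PP]; split; first by split=> [|u v]; [exact: mem0v | exact: memvB].
split; first by rewrite -(monomial0 y) monomial_mspan.
exact: mspan_mul.
Qed.

Lemma mspan_admissible typ l PL PS :
    {subset PL <= PS} -> (forall A B, PL A -> PS B -> PS (setSD A B)) ->
    (typ = TypeC -> (3 <= l)%N -> setSD_closed PS) ->
    (typ = TypeB -> (3 <= l)%N -> setSD_closed PL) ->
  admissible_pair typ l (pred_of_vspace (mspan PL)) (pred_of_vspace (mspan PS)).
Proof.
move=> sLS LSS PS_closed PL_closed.
have F2 : 2 \in [pchar F] by rewrite (pchar_lalg F).
split.
- by split; split=> [|u v]; (exact: mem0v || exact: memvB).
- split=> [x _ | x]; first by rewrite (pcharf0 F2) mul0r mem0v.
  exact/subvP/mspanS.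
- move=> t x _ Lx; have /vlineP[c ->] := F_sqr t.
  by rewrite -scalerAl mul1r memvZ.
- by split=> typ_l l3; apply: mspan_subring; [apply: PS_closed | apply: PL_closed].
- exact: mspan_mul.
Qed.

Lemma mspan_not_subfield P A B :
    P A -> P B -> [disjoint A & B] -> ~~ P (A :|: B) ->
  ~ is_subfield (pred_of_vspace (mspan P)).
Proof.
move=> PA PB dAB nPAB [[_ [_ mulP]] _].
have := mulP _ _ (monomial_mspan PA) (monomial_mspan PB).
by rewrite -monomialU //; apply/negP/monomial_notin_mspan.
Qed.

Lemma monomials_free_not_perfect (k : 'I_n) : ~ perfect_pchar K 2.
Proof.
move=> perfK; pose A := [set k].
have A0 : A != set0 by apply/set0Pn; exists k; rewrite inE.
have /vlineP[c mA2] := F_sqr (m A); have [z zc] := perfK c.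
have F2 : 2 \in [pchar F] by rewrite (pchar_lalg F).
have : (m A - z%:A) ^+ 2 = 0.
  by rewrite -(pFrobenius_autE F2) rmorphB /= !pFrobenius_autE mA2 exprZn expr1n zc subrr.
move=> /eqP; rewrite expf_eq0 /= subr_eq0 => /eqP mAz.
have /negP[] := monomial_notin_mspan (P := pred1 set0) A0.
by rewrite mAz -[1](monomial0 y) memvZ // monomial_mspan /=.
Qed.

End MonomialSpan.

(* The monomials spanning Q = K + K y0 + K y1 and P = E + E y2 + E y3. *)
Definition Qsets : pred {set 'I_4} := fun A => (A \subset [set 0; 1]) && (A != [set 0; 1]).
Definition Psets : pred {set 'I_4} := fun A => ~~ ([set 2; 3] \subset A).

Lemma setSD0 (T : finType) (B : {set T}) : setSD set0 B = B.
Proof. by rewrite /setSD set0D setD0 set0U. Qed.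

Lemma Qsets0 : Qsets set0.
Proof. by rewrite /Qsets sub0set eq_sym; apply/set0Pn; exists 0; rewrite !inE. Qed.

Lemma Qsets_sub_Psets : {subset Qsets <= Psets}.
Proof.
move=> A /andP[/subsetP A01 _]; apply/negP => /subsetP /(_ 2).
by rewrite !inE eqxx => /(_ isT) /A01; rewrite !inE.
Qed.

Lemma setSD_Qsets_Psets A B : Qsets A -> Psets B -> Psets (setSD A B).
Proof.
move=> /andP[/subsetP A01 _]; apply: contra => /subsetP sD; apply/subsetP => k k23.
have kA : k \notin A by apply: contraL k23 => /A01; rewrite !inE => /orP[] /eqP ->.
by have := sD k k23; rewrite !inE (negbTE kA) andbF.
Qed.

Lemma setSD_closed_set0 (T : finType) : setSD_closed (pred1 (@set0 T)).
Proof. by split=> [|A B /eqP -> /eqP ->]; rewrite /= ?setSD0. Qed.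

Lemma exists_nonfield_admissible_pair (K : fieldType) (F : fieldExtType K)
    (y : 'I_4 -> F) typ l :
    2 \in [pchar K] -> (forall x : F, x ^+ 2 \in 1%VS) -> monomials_free y ->
    (2 <= l)%N ->
  exists Q P : pred F,
    [/\ admissible_pair typ l Q P,
        (forall k : K, k%:A \in Q) /\ {subset Q <= P},
        (typ = TypeB -> (3 <= l)%N -> ~ is_subfield P) /\
        (typ = TypeC -> (3 <= l)%N -> ~ is_subfield Q)
      & (l = 2%N -> ~ is_subfield P /\ ~ is_subfield Q)].
Proof.
move=> K2 F_sqr y_free l2.
have scalar_in (P : pred {set 'I_4}) : P set0 -> forall k : K, k%:A \in mspan y P.
  by move=> P0 k; rewrite -(monomial0 y) memvZ // monomial_mspan.
have Q_nonfield : ~ is_subfield (pred_of_vspace (mspan y Qsets)).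
  apply: (mspan_not_subfield y_free (A := [set 0]) (B := [set 1])).
  - rewrite /Qsets sub1set !inE eqxx /= eq_sym.
    by apply/eqP => /setP /(_ 1); rewrite !inE.
  - rewrite /Qsets sub1set !inE eqxx orbT /= eq_sym.
    by apply/eqP => /setP /(_ 0); rewrite !inE.
  - by rewrite disjoints1 inE.
  - by rewrite /Qsets eqxx andbF.
have P_nonfield : ~ is_subfield (pred_of_vspace (mspan y Psets)).
  apply: (mspan_not_subfield y_free (A := [set 2]) (B := [set 3])).
  - by apply/subsetPn; exists 3; rewrite !inE.
  - by apply/subsetPn; exists 2; rewrite !inE.
  - by rewrite disjoints1 inE.
  - by rewrite /Psets negbK.
have [->|l_neq2] := eqVneq l 2%N.
  exists (pred_of_vspace (mspan y Qsets)), (pred_of_vspace (mspan y Psets)); split=> //.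
  - by apply: mspan_admissible => //; [exact: Qsets_sub_Psets | exact: setSD_Qsets_Psets].
  - by split; [exact: scalar_in Qsets0 | exact/subvP/mspanS/Qsets_sub_Psets].
have l3 : (3 <= l)%N by rewrite ltn_neqAle eq_sym l_neq2.
have l_ne2 : l <> 2%N by apply/eqP.
case: typ.
  exists (pred_of_vspace (mspan y (pred1 set0))), (pred_of_vspace (mspan y Qsets)).
  split=> //.
  - apply: mspan_admissible => // [A /eqP -> | A B /eqP -> QB | _ _]; rewrite ?setSD0 //.
      exact: Qsets0.
    exact: setSD_closed_set0.
  - split; first by apply: scalar_in => /=.
    by apply/subvP; apply: mspanS => A /eqP ->; exact: Qsets0.
exists (pred_of_vspace (mspan y Qsets)), (pred_of_vspace (mspan y xpredT)); split=> //.
- by apply: mspan_admissible.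
- by split; [exact: scalar_in Qsets0 | exact/subvP/mspanS].
Qed.

Theorem proposition7p1 (typ : rsType) (l : nat) (hl : (2 <= l)%N) :
  exists (K : fieldType) (F : fieldExtType K) (Q P : pred F),
    [/\ (2%N \in [pchar K]) /\ ~ perfect_pchar K 2,
        admissible_pair typ l Q P,
        (forall k : K, k%:A \in Q) /\ ({subset Q <= P}),
        (typ = TypeB -> (3 <= l)%N -> ~ is_subfield P) /\
        (typ = TypeC -> (3 <= l)%N -> ~ is_subfield Q)
      & (l = 2%N -> ~ is_subfield P /\ ~ is_subfield Q)].
Proof.
have [L [y [L2 y_basis]]] := exists_monomial_sq_basis 4.
pose F := frob_ext L2 y_basis.
have F_sqr : forall x : F, x ^+ 2 \in 1%VS by exact: frob_ext_sqr.
have y_free : monomials_free (y : 'I_4 -> F) by exact: frob_ext_free.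
have [Q [P []]] := exists_nonfield_admissible_pair typ L2 F_sqr y_free hl.
exists L, F, Q, P; split=> //; split=> //.
exact: (monomials_free_not_perfect L2 F_sqr y_free 0).
Qed.
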